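(* Let $V,W$ be complex vector spaces, let $M=(M_1,\dots,M_s)\in\mathrm{Hom}(V,W)^s$, and suppose $\mathrm{rk}(M)\geq r$ for some $r\in\mathbb{Z}_{\geq 0}$. Then there is a finite-dimensional subspace $U\subseteq V$ such that the restricted tuple $(M_1|_U,\dots,M_s|_U)\in\mathrm{Hom}(U,W)^s$ has rank at least $r$.
   Context: Rank of a tuple: for vector spaces $V,W$ and $M=(M_1,\dots,M_s)\in\mathrm{Hom}(V,W)^s$, $\mathrm{rk}(M)$ is the infimum of $\mathrm{rk}(\sum_i\lambda_iM_i)\in\mathbb{Z}_{\ge0}\cup\{\infty\}$ over all nonzero $(\lambda_1,\dots,\lambda_s)\in\mathbb{C}^s$ (so $\mathrm{rk}(M)=\infty$ if $s=0$). *)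

From HB Require Import structures.
From mathcomp Require Import all_boot all_order all_algebra.
Set Implicit Arguments. Unset Strict Implicit. Unset Printing Implicit Defensive.
Import Order.TTheory GRing.Theory Num.Theory.
Local Open Scope ring_scope.

Section RankDefs.
Variables (K : numClosedFieldType) (V W : lmodType K).

Definition lin_indep (r : nat) (w : 'I_r -> W) : Prop :=
  forall c : 'I_r -> K, \sum_(i < r) c i *: w i = 0 -> forall i, c i = 0.

(* rk(f restricted to U) >= r, where U is a subspace of V given as a predicate:
   U contains r vectors whose images under f are linearly independent,
   i.e. dim f(U) >= r (possibly infinite). *)
Definition restr_rank_ge (U : V -> Prop) (f : V -> W) (r : nat) : Prop :=
  exists v : 'I_r -> V, (forall i, U (v i)) /\ lin_indep (fun i => f (v i)).

Definition rank_ge (f : V -> W) (r : nat) : Prop :=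
  restr_rank_ge (fun _ => True) f r.

Definition comb (s : nat) (M : 'I_s -> {linear V -> W}) (lam : 'I_s -> K)
  : V -> W := fun x => \sum_(i < s) lam i *: M i x.

(* rk(M|_U) >= r : every nonzero combination has rank >= r on U
   (vacuous when s = 0, matching rk = infinity) *)
Definition restr_tuple_rank_ge (U : V -> Prop) (s : nat)
  (M : 'I_s -> {linear V -> W}) (r : nat) : Prop :=
  forall lam : 'I_s -> K, (exists i, lam i != 0) ->
    restr_rank_ge U (comb M lam) r.

Definition tuple_rank_ge (s : nat) (M : 'I_s -> {linear V -> W}) (r : nat)
  : Prop := forall lam : 'I_s -> K, (exists i, lam i != 0) ->
    rank_ge (comb M lam) r.

Definition in_span (n : nat) (u : 'I_n -> V) (x : V) : Prop :=
  exists c : 'I_n -> K, x = \sum_(j < n) c j *: u j.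

End RankDefs.

Set Warnings "-notation-overridden,-ambiguous-paths,-notation-incompatible-prefix".
From HB Require Import structures.
From mathcomp Require Import all_boot all_order all_algebra.
From Stdlib Require Import Classical.
From mathcomp Require Import zify.
Set Implicit Arguments. Unset Strict Implicit. Unset Printing Implicit Defensive.
Import GRing.Theory Num.Theory.
Local Open Scope ring_scope.

(* Fix a nonzero [lam]. If the vectors [M_lam t_j] (j < r), where
   [M_lam = sum_i lam_i M_i], are independent, there are r linear functionals
   on the span of the [M_i t_j] whose values [Y] on these vectors make the
   r x r matrix [sum_i lam_i Y_i] the identity. Conversely, any such data
   [(t, Y)] for which [det (sum_i lam_i Y_i)] is nonzero makes the [M_lam t_j]
   independent. The maps [lam |-> det (sum_i lam_i Y_i)] are polynomials of
   degree r in s variables, so their coefficient vectors span a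
   finite-dimensional space, spanned by those of finitely many data [(t, Y)].
   A polynomial that is nonzero at [lam] is a combination of these, so one of
   them is nonzero at [lam]; hence U, the span of their finitely many
   vectors [t_j], works for every [lam] at once. *)

Lemma exists_finite_spanning_rows (F : fieldType) (n : nat) (A : Type)
    (g : A -> 'rV[F]_n) :
  exists m (a : 'I_m -> A), forall x, (g x <= \matrix_(l < m) g (a l))%MS.
Proof.
pose rows m (a : 'I_m -> A) := \matrix_(l < m) g (a l).
suff grow d m (a : 'I_m -> A) : (n - \rank (rows m a) <= d)%N ->
    exists m (a : 'I_m -> A), forall x, (g x <= rows m a)%MS.
  apply: (grow n 0 (fun l => False_rect _ (notF (ltn_ord l)))).
  by rewrite leq_subr.
elim: d m a => [|d IHd] m a deficiency.
  exists m, a => x; apply: submx_full; rewrite /row_full eqn_leq rank_leq_col.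
  by rewrite -subn_eq0 -leqn0.
have [spans | /not_all_ex_not [x gx_new]] :=
  classic (forall x, (g x <= rows m a)%MS); first by exists m, a.
pose a' (l : 'I_(m + 1)) := if split l is inl l' then a l' else x.
apply: (IHd _ a').
have -> : rows _ a' = col_mx (rows m a) (g x).
  apply/matrixP => l c; rewrite -[l]splitK; case: (split l) => l'.
    by rewrite col_mxEu !mxE /a' unsplitK.
  by rewrite col_mxEd !mxE /a' unsplitK (ord1 l').
have rank_grows : (\rank (rows m a) < \rank (col_mx (rows m a) (g x)))%N.
  rewrite -addsmxE; apply: rank_ltmx; rewrite ltmxE addsmxSl /=.
  by apply: contra_notN gx_new => /(submx_trans (addsmxSr _ _)).
have := rank_leq_col (col_mx (rows m a) (g x)); lia.
Qed.

Lemma submx_mulmx_neq0 (F : fieldType) m n (x : 'rV[F]_n) (B : 'M_(m, n))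
    (v : 'cV_n) :
  (x <= B)%MS -> x *m v != 0 -> exists l, row l B *m v != 0.
Proof.
case/submxP=> c ->; rewrite -mulmxA => cBv_neq0.
have [l Bv_l | Bv0] := pickP (fun l => row l B *m v != 0); first by exists l.
suff Bv_eq0 : B *m v = 0 by rewrite Bv_eq0 mulmx0 eqxx in cBv_neq0.
by apply/row_matrixP => l; rewrite row0 row_mul; apply/eqP/negbFE/Bv0.
Qed.

Lemma exists_rinv_annihilating (F : fieldType) m k n (A : 'M[F]_(m, n))
    (B : 'M_(k, n)) :
  (forall u : 'rV_m, (u *m A <= B)%MS -> u = 0) ->
  exists Y, A *m Y = 1%:M /\ B *m Y = 0.
Proof.
move=> indepAB.
have AcapB0 : (<<A>> :&: <<B>> = 0)%MS.
  apply/eqP; rewrite -submx0; apply/rV_subP => v.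
  rewrite sub_capmx !genmxE submx0 => /andP[/submxP[u ->] uAB].
  by rewrite (indepAB u uAB) mul0mx.
have [A' AA'] : exists A', A *m A' = 1%:M.
  apply/row_freeP; rewrite -kermx_eq0 -submx0; apply/rV_subP => u.
  by move/sub_kermxP=> uA0; rewrite submx0 (indepAB u) ?uA0 ?sub0mx.
exists (proj_mx <<A>>%MS <<B>>%MS *m A'); split; rewrite mulmxA.
  by rewrite proj_mx_id ?genmxE.
by rewrite proj_mx_0 ?genmxE ?mul0mx.
Qed.

Section LinearCombinations.
Variables (F : fieldType) (W : lmodType F) (n : nat) (w : 'I_n -> W).

Definition lincomb (x : 'rV[F]_n) : W := \sum_k x 0 k *: w k.

Lemma lincomb_mul m (c : 'rV_m) (B : 'M_(m, n)) :
  lincomb (c *m B) = \sum_l c 0 l *: lincomb (row l B).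
Proof.
rewrite /lincomb; under eq_bigr do rewrite mxE scaler_suml.
rewrite exchange_big; apply: eq_bigr => l _; rewrite scaler_sumr.
by apply: eq_bigr => k _; rewrite mxE scalerA.
Qed.

Lemma lincomb_kernel :
  exists k (Z : 'M_(k, n)), forall x, (x <= Z)%MS <-> lincomb x = 0.
Proof.
have [k [a span_a]] :=
  exists_finite_spanning_rows (fun x : {x | lincomb x = 0} => sval x).
exists k, (\matrix_(l < k) sval (a l)) => x; split; last first.
  by move=> x0; apply: (span_a (exist _ x x0)).
case/submxP=> c ->; rewrite lincomb_mul big1 // => l _.
by rewrite rowK (svalP (a l)) scaler0.
Qed.

End LinearCombinations.

Lemma sum_enum_rank (R : nmodType) (T : finType) (h : 'I_#|{: T}| -> R) :
  \sum_(k < #|{: T}|) h k = \sum_(p : T) h (enum_rank p).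
Proof.
rewrite (reindex (@enum_rank T)) //.
by exists enum_val => x _; [apply: enum_rankK | apply: enum_valK].
Qed.

Lemma in_span_family (K : numClosedFieldType) (V : lmodType K) m r
    (T : 'I_m -> 'I_r -> V) :
  exists n (u : 'I_n -> V), forall l j, in_span u (T l j).
Proof.
exists #|{: 'I_m * 'I_r}|, (fun k => T (enum_val k).1 (enum_val k).2).
move=> l j; exists (fun k => (k == enum_rank (l, j))%:R).
rewrite (bigD1 (enum_rank (l, j))) //= eqxx scale1r enum_rankK big1 ?addr0 //.
by move=> k /negbTE ->; rewrite scale0r.
Qed.

Section Pencil.
Variables (K : numClosedFieldType) (V W : lmodType K) (s : nat)
  (M : 'I_s -> {linear V -> W}) (r : nat).

Definition npairs := #|{: 'I_s * 'I_r}|.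
Definition pair_index (i : 'I_s) (j : 'I_r) : 'I_npairs := enum_rank (i, j).
Definition nchoices := #|{: {ffun 'I_r -> 'I_s}}|.

Lemma sum_pairs (R : nmodType) (h : 'I_npairs -> R) :
  \sum_(k < npairs) h k = \sum_i \sum_j h (pair_index i j).
Proof. by rewrite pair_bigA sum_enum_rank; apply: eq_bigr => -[i j]. Qed.

Definition images (t : 'I_r -> V) (k : 'I_npairs) : W :=
  M (enum_val k).1 (t (enum_val k).2).

Lemma images_pair t i j : images t (pair_index i j) = M i (t j).
Proof. by rewrite /images /pair_index enum_rankK. Qed.

(* Column c of [Y] lists the values of a linear functional at the vectors
   [M i (t j)]; admissibility says these values respect every linear relation
   among the vectors, so the functional is well defined on their span. *)
Definition admissible (t : 'I_r -> V) (Y : 'M[K]_(npairs, r)) : Prop :=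
  forall x, lincomb (images t) x = 0 -> x *m Y = 0.

Definition pencil (lam : 'I_s -> K) (Y : 'M[K]_(npairs, r)) : 'M[K]_r :=
  \matrix_(j, c) \sum_i lam i * Y (pair_index i j) c.

Definition select (lam : 'I_s -> K) : 'M[K]_(r, npairs) :=
  \matrix_(j, k) if (enum_val k).2 == j then lam (enum_val k).1 else 0.

Lemma select_pair lam j i j' :
  select lam j (pair_index i j') = if j' == j then lam i else 0.
Proof. by rewrite mxE /pair_index enum_rankK. Qed.

Lemma lincomb_select t lam (d : 'rV[K]_r) :
  lincomb (images t) (d *m select lam) = \sum_j d 0 j *: comb M lam (t j).
Proof.
rewrite /lincomb sum_pairs exchange_big; apply: eq_bigr => j _.
rewrite /comb scaler_sumr; apply: eq_bigr => i _.
rewrite images_pair mxE scalerA (bigD1 j) //= select_pair eqxx big1 ?addr0 //.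
by move=> j' /negbTE j'j; rewrite select_pair eq_sym j'j mulr0.
Qed.

Lemma mul_select lam Y : select lam *m Y = pencil lam Y.
Proof.
apply/matrixP => j c; rewrite !mxE sum_pairs; apply: eq_bigr => i _.
rewrite (bigD1 j) //= select_pair eqxx big1 ?addr0 //.
by move=> j' /negbTE j'j; rewrite select_pair j'j mul0r.
Qed.

Lemma lin_indep_of_pencil_det t lam Y :
  admissible t Y -> \det (pencil lam Y) != 0 ->
  lin_indep (fun j => comb M lam (t j)).
Proof.
move=> admY detY d dep_d j.
pose dv : 'rV[K]_r := \row_j d j.
have dv_pencil0 : dv *m pencil lam Y = 0.
  rewrite -mul_select mulmxA; apply: admY; rewrite lincomb_select.
  by under eq_bigr do rewrite mxE.
have : dv = 0.
  by rewrite -(mulmxK (_ : pencil lam Y \in unitmx) dv) ?dv_pencil0 ?mul0mx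
             // unitmxE unitfE.
by move/rowP/(_ j); rewrite !mxE.
Qed.

Lemma exists_admissible_pencil1 t lam :
  lin_indep (fun j => comb M lam (t j)) ->
  exists Y, admissible t Y /\ pencil lam Y = 1%:M.
Proof.
move=> indep_t; have [k [Z kerZ]] := lincomb_kernel (images t).
have [Y [selY1 ZY0]] : exists Y, select lam *m Y = 1%:M /\ Z *m Y = 0.
  apply: exists_rinv_annihilating => u /kerZ.
  rewrite lincomb_select => /indep_t u0; apply/rowP => j.
  by rewrite u0 mxE.
exists Y; split; last by rewrite -mul_select.
by move=> x /kerZ /submxP[c ->]; rewrite -mulmxA ZY0 mulmx0.
Qed.

(* [det_coeffs Y] is the coefficient vector of the polynomial
   [lam |-> \det (pencil lam Y)] in the monomials [\prod_j lam (f j)],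
   indexed by the maps [f : 'I_r -> 'I_s]. *)
Definition monomials (lam : 'I_s -> K) : 'cV[K]_nchoices :=
  \col_k \prod_j lam ((enum_val k : {ffun 'I_r -> 'I_s}) j).

Definition det_coeffs (Y : 'M[K]_(npairs, r)) : 'rV[K]_nchoices :=
  \row_k \det (\matrix_(j, c)
    Y (pair_index ((enum_val k : {ffun 'I_r -> 'I_s}) j) j) c).

Lemma det_coeffsE Y lam :
  det_coeffs Y *m monomials lam = (\det (pencil lam Y))%:M.
Proof.
rewrite [LHS]mx11_scalar mxE sum_enum_rank /determinant.
under eq_bigr do rewrite !mxE enum_rankK.
under [in RHS]eq_bigr => sigma _.
  under eq_bigr do rewrite mxE.
  rewrite bigA_distr_bigA /= mulr_sumr.
  over.
rewrite /= exchange_big /=; congr _%:M; apply: eq_bigr => f _.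
rewrite mulr_suml; apply: eq_bigr => sigma _.
rewrite big_split /= -mulrA; congr (_ * _); rewrite mulrC; congr (_ * _).
by apply: eq_bigr => j _; rewrite mxE.
Qed.

End Pencil.

Theorem lemma3p4 (K : numClosedFieldType) (V W : lmodType K) (s : nat)
  (M : 'I_s -> {linear V -> W}) (r : nat) :
  tuple_rank_ge M r ->
  exists (n : nat) (u : 'I_n -> V), restr_tuple_rank_ge (in_span u) M r.
Proof.
move=> rank_M.
pose probe := {p : ('I_r -> V) * 'M[K]_(npairs s r, r) | admissible M p.1 p.2}.
have [m [a span_a]] :=
  exists_finite_spanning_rows (fun p : probe => det_coeffs (sval p).2).
have [n [u span_u]] := in_span_family (fun l => (sval (a l)).1).
exists n, u => lam nz_lam.
have [t [_ indep_t]] := rank_M lam nz_lam.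
have [Y [admY pencilY1]] := exists_admissible_pencil1 indep_t.
have : det_coeffs Y *m monomials r lam != 0.
  by rewrite det_coeffsE pencilY1 det1 -scalemx1 scaler_eq0 !oner_eq0.
case/(submx_mulmx_neq0 (span_a (exist _ (t, Y) admY))) => l.
rewrite rowK det_coeffsE -scalemx1 scaler_eq0 negb_or => /andP[det_l _].
exists (sval (a l)).1; split; first exact: span_u.
exact: lin_indep_of_pencil_det (svalP (a l)) det_l.
Qed.
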